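(* Let $\xi=(\xi_0\xi_1\ldots\xi_{m-1})^{\mathbb Z}\in\Sigma_2\setminus\{0^{\mathbb Z}\}$ be a periodic sequence such that the map $g=f_{[\xi_0\ldots\xi_{m-1}]}$ has a repelling fixed point $q$. Then $I_{[\xi]}$ is a non-trivial interval, and it contains points $p_\infty<q<\widetilde p_\infty$ which are fixed points of $g^2$.
   Context: Let $f_0,f_1\colon[0,1]\to[0,1]$ be $C^1$ injective maps such that: (F0.i) $f_0$ is increasing and has exactly two fixed points $0$ and $1$, both hyperbolic, with $f_0'(0)=\beta>1$, $f_0'(1)=\lambda\in(0,1)$ and $\lambda\le f_0'(x)\le\beta$ for all $x\in[0,1]$; (F0.ii) there are intervals $I_0=[a_0,b_0]\subset(0,1)$ with $b_0=f_0(a_0)$ and $I_1=[a_1,b_1]$ with $b_1=f_0(a_1)$, and numbers $\alpha>1$, $N\ge1$, with $f_0^N(I_0)=I_1$ and $\lambda\,(f_0^N)'(x)>\alpha$ for all $x\in I_0$; moreover $f_0$ is expanding on $[0,b_0]$ and contracting on $[a_1,1]$; (F1.i) $f_1$ is decreasing with $\gamma'=\min_{[0,1]}|f_1'|\le\gamma=\max_{[0,1]}|f_1'|<1$; (F1.ii) $|f_1'(x)|\ge\bar\alpha>1/\alpha$ for all $x\in[f_1^2(a_1),a_1]$; (F01) $f_1(1)=0$, $f_1([a_1,1])\subset[0,a_0)$, and $[0,f_0^{-2}(b_0))\subset f_1([0,1])$. For a finite word, $f_{[\xi_0\ldots\xi_n]}=f_{\xi_n}\circ\cdots\circ f_{\xi_0}$.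 $\Sigma_2=\{0,1\}^{\mathbb Z}$; $(\xi_0\ldots\xi_{m-1})^{\mathbb Z}$ is the periodic sequence with $\xi_{i+m}=\xi_i$ for all $i$. For $\xi\in\Sigma_2$ the admissible domain is $I_{[\xi]}=\bigcap_{k\ge1}f_{\xi_{-1}}\circ\cdots\circ f_{\xi_{-k}}([0,1])$ (a point or a non-trivial compact interval). *)

From Stdlib Require Import Reals Lra ZArith List.
From Coquelicot Require Import Coquelicot.
Open Scope R_scope.

Definition I01 (x : R) : Prop := 0 <= x <= 1.

(* f is C^1 on [0,1]: differentiable at every point of [0,1] (f is a map R -> R,
   only its restriction to [0,1] matters) and the derivative,
   restricted to [0,1], is continuous. *)
Definition C1_on01 (f : R -> R) : Prop :=
  (forall x, I01 x -> ex_derive f x) /\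
  (forall x, I01 x -> filterlim (Derive f) (within I01 (locally x)) (locally (Derive f x))).

Definition maps01 (f : R -> R) : Prop := forall x, I01 x -> I01 (f x).
Definition inj01 (f : R -> R) : Prop :=
  forall x y, I01 x -> I01 y -> f x = f y -> x = y.

Definition iter (n : nat) (f : R -> R) : R -> R := fun x => Nat.iter n f x.

Definition fsym (f0 f1 : R -> R) (b : bool) : R -> R := if b then f1 else f0.

(* f_[xi_0 ... xi_n] = f_{xi_n} o ... o f_{xi_0} : xi_0 is applied first *)
Definition fword (f0 f1 : R -> R) (w : list bool) : R -> R :=
  fun x => fold_left (fun y b => fsym f0 f1 b y) w x.

Definition periodic_seq (w : list bool) : Z -> bool :=
  fun i => nth (Z.to_nat (i mod Z.of_nat (length w))) w false.

(* backward composition  f_{xi_{-1}} o ... o f_{xi_{-k}} *)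
Fixpoint back_comp (f0 f1 : R -> R) (xi : Z -> bool) (k : nat) : R -> R :=
  match k with
  | O => fun x => x
  | S k' => fun x => back_comp f0 f1 xi k' (fsym f0 f1 (xi (- Z.of_nat (S k'))%Z) x)
  end.

(* admissible domain I_[xi] = bigcap_{k>=1} f_{xi_{-1}} o ... o f_{xi_{-k}} ([0,1]) *)
Definition adm_domain (f0 f1 : R -> R) (xi : Z -> bool) : R -> Prop :=
  fun y => forall k : nat, (1 <= k)%nat ->
    exists x, I01 x /\ back_comp f0 f1 xi k x = y.

Definition standing_hyps (f0 f1 : R -> R)
  (beta lambda a0 b0 a1 b1 alpha : R) (N : nat) (gamma' gamma alphabar : R) : Prop :=
  C1_on01 f0 /\ C1_on01 f1 /\ maps01 f0 /\ maps01 f1 /\ inj01 f0 /\ inj01 f1 /\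
  (forall x y, I01 x -> I01 y -> x < y -> f0 x < f0 y) /\
  (forall x, I01 x -> (f0 x = x <-> (x = 0 \/ x = 1))) /\
  Derive f0 0 = beta /\ beta > 1 /\
  Derive f0 1 = lambda /\ 0 < lambda < 1 /\
  (forall x, I01 x -> lambda <= Derive f0 x <= beta) /\
  0 < a0 /\ a0 <= b0 /\ b0 < 1 /\ b0 = f0 a0 /\
  a1 <= b1 /\ b1 = f0 a1 /\
  alpha > 1 /\ (1 <= N)%nat /\
  (forall y, a1 <= y <= b1 <-> exists x, a0 <= x <= b0 /\ iter N f0 x = y) /\
  (forall x, a0 <= x <= b0 -> lambda * Derive (iter N f0) x > alpha) /\
  (forall x, 0 <= x <= b0 -> Derive f0 x > 1) /\
  (forall x, a1 <= x <= 1 -> Derive f0 x < 1) /\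
  (forall x y, I01 x -> I01 y -> x < y -> f1 x > f1 y) /\
  (forall x, I01 x -> gamma' <= Rabs (Derive f1 x)) /\
  (exists x, I01 x /\ Rabs (Derive f1 x) = gamma') /\
  (forall x, I01 x -> Rabs (Derive f1 x) <= gamma) /\
  (exists x, I01 x /\ Rabs (Derive f1 x) = gamma) /\
  gamma < 1 /\
  alphabar > 1 / alpha /\
  (forall x, f1 (f1 a1) <= x <= a1 -> Rabs (Derive f1 x) >= alphabar) /\
  f1 1 = 0 /\
  (forall x, a1 <= x <= 1 -> 0 <= f1 x < a0) /\
  (forall c y, I01 c -> f0 (f0 c) = b0 -> 0 <= y < c ->
     exists x, I01 x /\ f1 x = y).

From Stdlib Require Import Reals Lra Lia ZArith List Ranalysis5.
From Coquelicot Require Import Coquelicot.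
Open Scope R_scope.

(* Along the periodic sequence, a backward composition of length k + m is g
   applied after one of length k, so [I_[xi]] is a nested intersection of
   intervals, hence a closed interval [a, b] that g maps bijectively onto
   itself.  As q is repelling, a neighbourhood of q is covered by its own
   image under g, so it lies in every g^k([0,1]) and therefore in [a, b].
   A monotone bijection of [a, b] fixes or swaps the endpoints, so a and b
   are fixed by g^2.  The symbol 1 in the word makes g move both 0 and 1,
   which keeps q, and with it the neighbourhood, inside (0,1). *)

Lemma I01_0 : I01 0.
Proof. unfold I01; lra. Qed.

Lemma I01_1 : I01 1.
Proof. unfold I01; lra. Qed.

Lemma IVT_between (f : R -> R) (u v y : R) :
  (forall t, u <= t <= v -> continuity_pt f t) -> u <= v ->
  Rmin (f u) (f v) <= y <= Rmax (f u) (f v) -> exists z, u <= z <= v /\ f z = y.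
Proof.
  intros Hc Huv Hy.
  destruct (Req_dec (f u) y) as [Eu|Eu]; [exists u; split; [lra|exact Eu]|].
  destruct (Req_dec (f v) y) as [Ev|Ev]; [exists v; split; [lra|exact Ev]|].
  assert (Huv' : u < v).
  { destruct (Req_dec u v) as [<-|]; [|lra].
    rewrite Rmin_left, Rmax_left in Hy by lra. lra. }
  assert (Hcst : forall t, u <= t <= v -> continuity_pt (fun _ => y) t)
    by (intros t _; apply continuity_pt_const; now intros ? ?).
  destruct (Rle_dec (f u) (f v)).
  - rewrite Rmin_left, Rmax_right in Hy by lra.
    destruct (IVT_interv (fun t => f t - y) u v) as [z [Hz Hfz]]; try lra.
    + intros t Ht. apply continuity_pt_minus; auto.
    + exists z; split; [exact Hz|lra].
  - rewrite Rmin_right, Rmax_left in Hy by lra.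
    destruct (IVT_interv (fun t => y - f t) u v) as [z [Hz Hfz]]; try lra.
    + intros t Ht. apply continuity_pt_minus; auto.
    + exists z; split; [exact Hz|lra].
Qed.

Lemma ex_derive_continuity_pt (f : R -> R) (x : R) : ex_derive f x -> continuity_pt f x.
Proof. intros Hd. apply continuity_pt_filterlim, (ex_derive_continuous f x Hd). Qed.

Lemma Rabs_sub_le_Derive_bound (f : R -> R) (M : R) :
  (forall x, I01 x -> ex_derive f x) ->
  (forall x, I01 x -> Rabs (Derive f x) <= M) ->
  Rabs (f 1 - f 0) <= M.
Proof.
  intros Hd HM.
  destruct (MVT_gen f 0 1 (Derive f)) as [c [Hc Hfc]]; cbv zeta in *;
    rewrite ?Rmin_left, ?Rmax_right in * by lra.
  - intros x Hx. apply Derive_correct, Hd. unfold I01; lra.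
  - intros x Hx. apply ex_derive_continuity_pt, Hd. unfold I01; lra.
  - rewrite Hfc, Rminus_0_r, Rmult_1_r. apply HM. unfold I01; lra.
Qed.

Definition strictly_monotone01 (h : R -> R) : Prop :=
  (forall x y, I01 x -> I01 y -> x < y -> h x < h y) \/
  (forall x y, I01 x -> I01 y -> x < y -> h y < h x).

Definition monotone_branch (h : R -> R) : Prop :=
  maps01 h /\ (forall x, I01 x -> ex_derive h x) /\ strictly_monotone01 h.

Lemma monotone_branch_id : monotone_branch (fun x => x).
Proof.
  split; [|split]; [intros x Hx; exact Hx|intros x _; apply ex_derive_id|left; auto].
Qed.

Lemma monotone_branch_comp (h1 h2 : R -> R) :
  monotone_branch h1 -> monotone_branch h2 -> monotone_branch (fun x => h2 (h1 x)).
Proof.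
  intros [M1 [D1 S1]] [M2 [D2 S2]]. split; [|split].
  - intros x Hx; auto.
  - intros x Hx. apply ex_derive_comp; auto.
  - destruct S1 as [S1|S1], S2 as [S2|S2]; [left|right|right|left];
      intros x y Hx Hy Hxy; auto.
Qed.

Lemma monotone_branch_le (h : R -> R) : monotone_branch h ->
  (forall x y, I01 x -> I01 y -> x <= y -> h x <= h y) \/
  (forall x y, I01 x -> I01 y -> x <= y -> h y <= h x).
Proof.
  intros [_ [_ [S|S]]]; [left|right]; intros x y Hx Hy Hxy;
    (destruct (Req_dec x y) as [->|Hne]; [lra|]);
    specialize (S x y Hx Hy ltac:(lra)); lra.
Qed.

Lemma monotone_branch_inj (h : R -> R) : monotone_branch h ->
  forall x y, I01 x -> I01 y -> h x = h y -> x = y.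
Proof.
  intros [_ [_ S]] x y Hx Hy E.
  destruct (Rtotal_order x y) as [Hl|[Hl|Hl]]; [|exact Hl|]; exfalso;
    destruct S as [S|S]; (specialize (S x y Hx Hy Hl) || specialize (S y x Hy Hx Hl)); lra.
Qed.

Lemma monotone_branch_range (h : R -> R) : monotone_branch h -> forall y,
  (exists x, I01 x /\ h x = y) <-> Rmin (h 0) (h 1) <= y <= Rmax (h 0) (h 1).
Proof.
  intros Bh y. split.
  - intros [x [Hx <-]].
    destruct (monotone_branch_le h Bh) as [W|W];
      pose proof (W 0 x I01_0 Hx (proj1 Hx)); pose proof (W x 1 Hx I01_1 (proj2 Hx));
      unfold Rmin, Rmax; destruct (Rle_dec (h 0) (h 1)); lra.
  - intros Hy. destruct Bh as [_ [D _]].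
    destruct (IVT_between h 0 1 y) as [z [Hz Hhz]]; try lra.
    + intros t Ht. apply ex_derive_continuity_pt, D. exact Ht.
    + exists z; split; [exact Hz|exact Hhz].
Qed.

Lemma monotone_branch_fword (f0 f1 : R -> R) (w : list bool) :
  monotone_branch f0 -> monotone_branch f1 -> monotone_branch (fword f0 f1 w).
Proof.
  intros B0 B1. induction w as [|b w IH]; [exact monotone_branch_id|].
  change (monotone_branch (fun x => fword f0 f1 w (fsym f0 f1 b x))).
  apply monotone_branch_comp; [destruct b|]; assumption.
Qed.

Lemma monotone_branch_back_comp (f0 f1 : R -> R) (xi : Z -> bool) (k : nat) :
  monotone_branch f0 -> monotone_branch f1 -> monotone_branch (back_comp f0 f1 xi k).
Proof.
  intros B0 B1. induction k as [|k IH]; [exact monotone_branch_id|].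
  apply (monotone_branch_comp (fsym f0 f1 _)); [destruct (xi _)|]; assumption.
Qed.

Lemma fword_app (f0 f1 : R -> R) (u v : list bool) (x : R) :
  fword f0 f1 (u ++ v) x = fword f0 f1 v (fword f0 f1 u x).
Proof. unfold fword. apply fold_left_app. Qed.

Lemma fword_invariant (f0 f1 : R -> R) (P : R -> Prop) :
  (forall b x, P x -> P (fsym f0 f1 b x)) -> forall w x, P x -> P (fword f0 f1 w x).
Proof.
  intros HP w. induction w as [|b w IH]; intros x Hx; [exact Hx|].
  apply (IH (fsym f0 f1 b x)), HP, Hx.
Qed.

Section WordBoundary.

Variables f0 f1 : R -> R.
Hypothesis f0_maps01 : maps01 f0.
Hypothesis f1_maps01 : maps01 f1.
Hypothesis f0_incr : forall x y, I01 x -> I01 y -> x < y -> f0 x < f0 y.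
Hypothesis f1_decr : forall x y, I01 x -> I01 y -> x < y -> f1 x > f1 y.
Hypothesis f0_0 : f0 0 = 0.
Hypothesis f0_1 : f0 1 = 1.
Hypothesis f1_1 : f1 1 = 0.
Hypothesis f1_0_lt_1 : f1 0 < 1.

Lemma f1_lt_1 (x : R) : I01 x -> f1 x < 1.
Proof.
  intros Hx. destruct (Req_dec x 0) as [->|Hx0]; [exact f1_0_lt_1|].
  specialize (f1_decr 0 x I01_0 Hx). unfold I01 in Hx. lra.
Qed.

Lemma f1_pos (x : R) : 0 <= x < 1 -> 0 < f1 x.
Proof.
  intros Hx. rewrite <- f1_1. apply f1_decr; [unfold I01; lra|exact I01_1|lra].
Qed.

Lemma fword_open01 (w : list bool) (x : R) : 0 < x < 1 -> 0 < fword f0 f1 w x < 1.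
Proof.
  apply (fword_invariant f0 f1 (fun x => 0 < x < 1)). intros [|] y Hy; simpl.
  - split; [apply f1_pos; lra|apply f1_lt_1; unfold I01; lra].
  - split; [rewrite <- f0_0|rewrite <- f0_1]; apply f0_incr; unfold I01; lra.
Qed.

Lemma fword_right_open01 (w : list bool) (x : R) : 0 <= x < 1 -> 0 <= fword f0 f1 w x < 1.
Proof.
  apply (fword_invariant f0 f1 (fun x => 0 <= x < 1)). intros [|] y Hy; simpl.
  - split; [apply Rlt_le, f1_pos; lra|apply f1_lt_1; unfold I01; lra].
  - split; [apply f0_maps01; unfold I01; lra|rewrite <- f0_1; apply f0_incr; unfold I01; lra].
Qed.

Lemma fword_moves_endpoints (w : list bool) :
  In true w -> 0 < fword f0 f1 w 0 /\ fword f0 f1 w 1 < 1.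
Proof.
  intros Hw. destruct (in_split true w Hw) as (u & v & ->).
  rewrite !fword_app. change (fword f0 f1 (true :: v)) with (fun x => fword f0 f1 v (f1 x)).
  cbv beta.
  assert (Hu0 := fword_right_open01 u 0 ltac:(lra)).
  assert (Hu1 : I01 (fword f0 f1 u 1)).
  { apply fword_invariant; [intros [|]; simpl; auto|exact I01_1]. }
  split.
  - apply fword_open01. split; [apply f1_pos; lra|apply f1_lt_1; unfold I01; lra].
  - apply fword_right_open01. split; [apply f1_maps01, Hu1|apply f1_lt_1, Hu1].
Qed.

End WordBoundary.

Definition shift_seq (n : nat) (xi : Z -> bool) : Z -> bool := fun i => xi (i - Z.of_nat n)%Z.

Lemma back_comp_add (f0 f1 : R -> R) (xi : Z -> bool) (n k : nat) (x : R) :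
  back_comp f0 f1 xi (k + n) x = back_comp f0 f1 xi n (back_comp f0 f1 (shift_seq n xi) k x).
Proof.
  revert x. induction k as [|k IH]; intros x; [reflexivity|].
  change (back_comp f0 f1 xi (k + n) (fsym f0 f1 (xi (- Z.of_nat (S (k + n)))%Z) x)
    = back_comp f0 f1 xi n (back_comp f0 f1 (shift_seq n xi) k
        (fsym f0 f1 (shift_seq n xi (- Z.of_nat (S k))%Z) x))).
  rewrite IH. unfold shift_seq. do 4 f_equal. lia.
Qed.

Lemma back_comp_ext (f0 f1 : R -> R) (xi xi' : Z -> bool) (k : nat) (x : R) :
  (forall i, xi i = xi' i) -> back_comp f0 f1 xi k x = back_comp f0 f1 xi' k x.
Proof.
  intros E. revert x; induction k as [|k IH]; intros x; [reflexivity|].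
  simpl. rewrite E. apply IH.
Qed.

Lemma back_comp_image_nested (f0 f1 : R -> R) (xi : Z -> bool) (j k : nat) (x : R) :
  monotone_branch f0 -> monotone_branch f1 -> I01 x ->
  exists x', I01 x' /\ back_comp f0 f1 xi (j + k) x = back_comp f0 f1 xi k x'.
Proof.
  intros B0 B1 Hx. exists (back_comp f0 f1 (shift_seq k xi) j x). split.
  - apply (monotone_branch_back_comp f0 f1 _ j B0 B1), Hx.
  - apply back_comp_add.
Qed.

Lemma back_comp_word (f0 f1 : R -> R) (w : list bool) (xi : Z -> bool) (x : R) :
  (forall i, (i < length w)%nat -> xi (Z.of_nat i - Z.of_nat (length w))%Z = nth i w false) ->
  back_comp f0 f1 xi (length w) x = fword f0 f1 w x.
Proof.
  revert xi. induction w as [|b w IH] using rev_ind; intros xi Hxi; [reflexivity|].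
  rewrite length_app in Hxi |- *. simpl length in Hxi |- *.
  rewrite back_comp_add, (IH (shift_seq 1 xi)), fword_app.
  - simpl. replace (xi (-1)%Z) with b; [reflexivity|].
    specialize (Hxi (length w) ltac:(lia)).
    rewrite app_nth2, Nat.sub_diag in Hxi by lia. cbn [nth] in Hxi.
    rewrite <- Hxi. f_equal. lia.
  - intros i Hi. unfold shift_seq. specialize (Hxi i ltac:(lia)).
    rewrite app_nth1 in Hxi by lia. rewrite <- Hxi. f_equal. lia.
Qed.

Lemma periodic_seq_sub_period (w : list bool) (i : Z) : (1 <= length w)%nat ->
  periodic_seq w (i - Z.of_nat (length w))%Z = periodic_seq w i.
Proof.
  intros Hm. unfold periodic_seq. do 2 f_equal.
  replace (i - Z.of_nat (length w))%Z with (i + (-1) * Z.of_nat (length w))%Z by lia.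
  apply Z_mod_plus_full.
Qed.

Lemma back_comp_periodic_add_period (f0 f1 : R -> R) (w : list bool) (k : nat) (x : R) :
  (1 <= length w)%nat ->
  back_comp f0 f1 (periodic_seq w) (k + length w) x
  = fword f0 f1 w (back_comp f0 f1 (periodic_seq w) k x).
Proof.
  intros Hm. rewrite back_comp_add, back_comp_word.
  - f_equal. apply back_comp_ext. intros i. apply periodic_seq_sub_period, Hm.
  - intros i Hi. unfold periodic_seq.
    replace (Z.of_nat i - Z.of_nat (length w))%Z
      with (Z.of_nat i + (-1) * Z.of_nat (length w))%Z by lia.
    rewrite Z_mod_plus_full, Z.mod_small by lia. rewrite Nat2Z.id. reflexivity.
Qed.

Lemma nat_intersection_of_intervals (lo hi : nat -> R) (M m : R) :
  (forall k, lo k <= M) -> (forall k, m <= hi k) ->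
  exists a b, forall y, (forall k, lo k <= y <= hi k) <-> a <= y <= b.
Proof.
  intros Hlo Hhi.
  destruct (completeness (fun r => exists k, r = lo k)) as [a [Ua La]].
  { exists M. intros r [k ->]. apply Hlo. }
  { exists (lo 0%nat), 0%nat. reflexivity. }
  destruct (completeness (fun r => exists k, r = - hi k)) as [nb [Ub Lb]].
  { exists (- m). intros r [k ->]. specialize (Hhi k). lra. }
  { exists (- hi 0%nat), 0%nat. reflexivity. }
  exists a, (- nb). intros y. split.
  - intros Hy. split.
    + apply La. intros r [k ->]. apply Hy.
    + enough (nb <= - y) by lra. apply Lb. intros r [k ->]. specialize (Hy k). lra.
  - intros Hy k. split.
    + enough (lo k <= a) by lra. apply Ua. now exists k.
    + enough (- hi k <= nb) by lra. apply Ub. now exists k.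
Qed.

Lemma adm_domain_closed_interval (f0 f1 : R -> R) (xi : Z -> bool) :
  monotone_branch f0 -> monotone_branch f1 ->
  exists a b, forall y, adm_domain f0 f1 xi y <-> a <= y <= b.
Proof.
  intros B0 B1. set (B k := back_comp f0 f1 xi (S k)).
  assert (BB : forall k, monotone_branch (B k)) by (intros k; now apply monotone_branch_back_comp).
  assert (B01 : forall k, I01 (B k 0)) by (intros k; apply (BB k), I01_0).
  destruct (nat_intersection_of_intervals
    (fun k => Rmin (B k 0) (B k 1)) (fun k => Rmax (B k 0) (B k 1)) 1 0) as (a & b & Hab).
  - intros k. specialize (B01 k). pose proof (Rmin_l (B k 0) (B k 1)). unfold I01 in *. lra.
  - intros k. specialize (B01 k). pose proof (Rmax_l (B k 0) (B k 1)). unfold I01 in *. lra.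
  - exists a, b. intros y. rewrite <- Hab. split.
    + intros Hy k. apply (monotone_branch_range (B k) (BB k)), Hy. lia.
    + intros Hy [|k] Hk; [lia|]. apply (monotone_branch_range (B k) (BB k)), Hy.
Qed.

Lemma adm_domain_in01 (f0 f1 : R -> R) (xi : Z -> bool) (y : R) :
  monotone_branch f0 -> monotone_branch f1 -> adm_domain f0 f1 xi y -> I01 y.
Proof.
  intros B0 B1 Hy. destruct (Hy 1%nat (le_n 1)) as [x [Hx <-]].
  apply (monotone_branch_back_comp f0 f1 xi 1 B0 B1), Hx.
Qed.

Lemma monotone_branch_invariant_interval_endpoints (g : R -> R) (a b : R) :
  monotone_branch g -> 0 <= a -> a <= b -> b <= 1 ->
  (forall y, a <= y <= b -> a <= g y <= b) ->
  (forall y, a <= y <= b -> exists z, a <= z <= b /\ g z = y) ->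
  g (g a) = a /\ g (g b) = b.
Proof.
  intros Bg Ha Hab Hb Hinv Hsurj.
  assert (Ia : I01 a) by (unfold I01; lra). assert (Ib : I01 b) by (unfold I01; lra).
  destruct (Hsurj a ltac:(lra)) as [za [Hza Eza]]. destruct (Hsurj b ltac:(lra)) as [zb [Hzb Ezb]].
  assert (Iza : I01 za) by (unfold I01; lra). assert (Izb : I01 zb) by (unfold I01; lra).
  pose proof (Hinv a ltac:(lra)). pose proof (Hinv b ltac:(lra)).
  destruct (monotone_branch_le g Bg) as [W|W].
  - pose proof (W a za Ia Iza (proj1 Hza)). pose proof (W zb b Izb Ib (proj2 Hzb)).
    assert (g a = a) as -> by lra. assert (g b = b) as -> by lra. split; lra.
  - pose proof (W a zb Ia Izb (proj1 Hzb)). pose proof (W za b Iza Ib (proj2 Hza)).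
    assert (g a = b) as -> by lra. assert (g b = a) as -> by lra. split; lra.
Qed.

Section PeriodicDomain.

Variables f0 f1 : R -> R.
Variable w : list bool.
Hypothesis f0_branch : monotone_branch f0.
Hypothesis f1_branch : monotone_branch f1.
Hypothesis w_nonempty : (1 <= length w)%nat.

Lemma adm_domain_periodic_forward (y : R) :
  adm_domain f0 f1 (periodic_seq w) y -> adm_domain f0 f1 (periodic_seq w) (fword f0 f1 w y).
Proof.
  intros Hy k Hk. destruct (Hy k Hk) as [x [Hx <-]].
  destruct (back_comp_image_nested f0 f1 (periodic_seq w) (length w) k x f0_branch f1_branch Hx)
    as [x' [Hx' E]].
  exists x'. split; [exact Hx'|].
  rewrite <- E, Nat.add_comm. apply back_comp_periodic_add_period, w_nonempty.
Qed.

(* Writing y = B_{k+m} x_k = g (B_k x_k), injectivity of g makes B_k x_k independent of k. *)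
Lemma adm_domain_periodic_backward (y : R) :
  adm_domain f0 f1 (periodic_seq w) y ->
  exists z, adm_domain f0 f1 (periodic_seq w) z /\ fword f0 f1 w z = y.
Proof.
  set (B := back_comp f0 f1 (periodic_seq w)).
  assert (BB : forall k, monotone_branch (B k)) by (intros k; now apply monotone_branch_back_comp).
  assert (Badd : forall k x, B (k + length w)%nat x = fword f0 f1 w (B k x))
    by (intros k x; apply back_comp_periodic_add_period, w_nonempty).
  intros Hy. destruct (Hy (1 + length w)%nat ltac:(lia)) as [x1 [Hx1 E1]].
  rewrite Badd in E1. exists (B 1%nat x1). split; [|exact E1].
  intros k Hk. destruct (Hy (k + length w)%nat ltac:(lia)) as [xk [Hxk Ek]].
  rewrite Badd in Ek. exists xk. split; [exact Hxk|].
  apply (monotone_branch_inj _ (monotone_branch_fword f0 f1 w f0_branch f1_branch));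
    [apply (BB k), Hxk|apply (BB 1%nat), Hx1|transitivity y; [exact Ek|symmetry; exact E1]].
Qed.

Lemma adm_domain_contains_covered_interval (u v : R) :
  0 <= u -> v <= 1 ->
  (forall y, u <= y <= v -> exists z, u <= z <= v /\ fword f0 f1 w z = y) ->
  forall y, u <= y <= v -> adm_domain f0 f1 (periodic_seq w) y.
Proof.
  intros Hu Hv Hcov.
  set (B := back_comp f0 f1 (periodic_seq w)).
  assert (Hiter : forall j y, u <= y <= v -> exists x, I01 x /\ B (j * length w)%nat x = y).
  { induction j as [|j IH]; intros y Hy.
    - exists y. split; [unfold I01; lra|reflexivity].
    - destruct (Hcov y Hy) as [z [Hz <-]]. destruct (IH z Hz) as [x [Hx <-]].
      exists x. split; [exact Hx|].
      replace (S j * length w)%nat with (j * length w + length w)%nat by lia.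
      apply back_comp_periodic_add_period, w_nonempty. }
  intros y Hy k _. destruct (Hiter k y Hy) as [x [Hx <-]].
  replace (k * length w)%nat with ((k * length w - k) + k)%nat by nia.
  destruct (back_comp_image_nested f0 f1 (periodic_seq w) (k * length w - k) k x
    f0_branch f1_branch Hx) as [x' [Hx' E]].
  exists x'. split; [exact Hx'|symmetry; exact E].
Qed.

Lemma adm_domain_periodic_endpoints (a b : R) : a <= b ->
  (forall y, adm_domain f0 f1 (periodic_seq w) y <-> a <= y <= b) ->
  fword f0 f1 w (fword f0 f1 w a) = a /\ fword f0 f1 w (fword f0 f1 w b) = b.
Proof.
  intros Hle Hab.
  assert (Ia : I01 a) by (apply (adm_domain_in01 f0 f1 (periodic_seq w)), Hab; auto; lra).
  assert (Ib : I01 b) by (apply (adm_domain_in01 f0 f1 (periodic_seq w)), Hab; auto; lra).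
  apply monotone_branch_invariant_interval_endpoints;
    [apply monotone_branch_fword; assumption|apply Ia|exact Hle|apply Ib| |].
  - intros y Hy. apply Hab, adm_domain_periodic_forward, Hab, Hy.
  - intros y Hy. destruct (adm_domain_periodic_backward y (proj2 (Hab y) Hy)) as [z [Hz Ez]].
    exists z. split; [apply Hab, Hz|exact Ez].
Qed.

End PeriodicDomain.

Lemma repelling_fixed_point_expands (g : R -> R) (q : R) :
  ex_derive g q -> g q = q -> 1 < Rabs (Derive g q) ->
  exists del : posreal, forall h, h <> 0 -> Rabs h < del -> Rabs h < Rabs (g (q + h) - q).
Proof.
  intros Hd Hfix Hrep. set (L := Derive g q) in *.
  assert (HL : derivable_pt_lim g q L) by (apply is_derive_Reals, Derive_correct, Hd).
  destruct (HL (Rabs L - 1) ltac:(lra)) as [del Hdel].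
  exists del. intros h Hh Hhd. specialize (Hdel h Hh Hhd). rewrite Hfix in Hdel.
  set (D := (g (q + h) - q) / h) in *.
  assert (E : g (q + h) - q = D * h) by (unfold D; field; exact Hh).
  rewrite E, Rabs_mult.
  pose proof (Rabs_triang_inv L (L - D)) as Htri.
  replace (L - (L - D)) with D in Htri by ring.
  rewrite Rabs_minus_sym in Hdel.
  pose proof (Rabs_pos_lt h Hh). nra.
Qed.

Lemma repelling_fixed_point_covering (g : R -> R) (q : R) :
  monotone_branch g -> 0 < q < 1 -> g q = q -> 1 < Rabs (Derive g q) ->
  exists eps, 0 < eps /\ 0 <= q - eps /\ q + eps <= 1 /\
    forall y, q - eps <= y <= q + eps -> exists z, q - eps <= z <= q + eps /\ g z = y.
Proof.
  intros Bg Hq Hfix Hrep.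
  assert (Iq : I01 q) by (unfold I01; lra).
  destruct (repelling_fixed_point_expands g q (proj1 (proj2 Bg) q Iq) Hfix Hrep) as [del Hdel].
  set (eps := Rmin (del / 2) (Rmin (q / 2) ((1 - q) / 2))).
  assert (Heps : 0 < eps).
  { pose proof (cond_pos del). unfold eps. repeat apply Rmin_glb_lt; lra. }
  assert (Heps_bounds : eps <= del / 2 /\ eps <= q / 2 /\ eps <= (1 - q) / 2).
  { split; [apply Rmin_l|split]; eapply Rle_trans; [apply Rmin_r|apply Rmin_l|apply Rmin_r|apply Rmin_r]. }
  pose proof (cond_pos del).
  assert (Hr : eps < Rabs (g (q + eps) - q)).
  { rewrite <- (Rabs_pos_eq eps) at 1 by lra. apply Hdel; [lra|rewrite Rabs_pos_eq; lra]. }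
  assert (Hl : eps < Rabs (g (q - eps) - q)).
  { rewrite <- (Rabs_pos_eq eps), <- Rabs_Ropp at 1 by lra. unfold Rminus at 1.
    apply Hdel; [lra|rewrite Rabs_Ropp, Rabs_pos_eq; lra]. }
  exists eps. split; [exact Heps|split; [lra|split; [lra|]]].
  intros y Hy. apply IVT_between; [|lra|].
  - intros t Ht. apply ex_derive_continuity_pt, Bg. unfold I01; lra.
  - assert (Il : I01 (q - eps)) by (unfold I01; lra).
    assert (Ir : I01 (q + eps)) by (unfold I01; lra).
    destruct Bg as [_ [_ [S|S]]];
      pose proof (S q (q + eps) Iq Ir ltac:(lra)); pose proof (S (q - eps) q Il Iq ltac:(lra));
      rewrite Hfix in *; unfold Rabs, Rmin, Rmax in *;
      destruct (Rcase_abs (g (q + eps) - q)), (Rcase_abs (g (q - eps) - q)),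
        (Rle_dec (g (q - eps)) (g (q + eps))); lra.
Qed.

Lemma standing_hyps_branches (f0 f1 : R -> R)
  (beta lambda a0 b0 a1 b1 alpha : R) (N : nat) (gamma' gamma alphabar : R) :
  standing_hyps f0 f1 beta lambda a0 b0 a1 b1 alpha N gamma' gamma alphabar ->
  monotone_branch f0 /\ monotone_branch f1.
Proof.
  intros (HC0 & HC1 & Hm0 & Hm1 & _ & _ & Hinc0 & _ & _ & _ & _ & _ & _ & _ & _ & _
    & _ & _ & _ & _ & _ & _ & _ & _ & _ & Hdec1 & _).
  split; split; [exact Hm0| |exact Hm1| ]; split;
    [apply HC0|left; exact Hinc0|apply HC1|right; exact Hdec1].
Qed.

Lemma standing_hyps_fword_moves_endpoints (f0 f1 : R -> R)
  (beta lambda a0 b0 a1 b1 alpha : R) (N : nat) (gamma' gamma alphabar : R) (w : list bool) :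
  standing_hyps f0 f1 beta lambda a0 b0 a1 b1 alpha N gamma' gamma alphabar -> In true w ->
  0 < fword f0 f1 w 0 /\ fword f0 f1 w 1 < 1.
Proof.
  intros (_ & HC1 & Hm0 & Hm1 & _ & _ & Hinc0 & Hfix0 & _ & _ & _ & _ & _ & _ & _ & _
    & _ & _ & _ & _ & _ & _ & _ & _ & _ & Hdec1 & _ & _ & Hgam & _ & Hgam1 & _ & _ & Hf11 & _ & _) Hw.
  assert (Hf1_0 : f1 0 < 1).
  { pose proof (Rabs_sub_le_Derive_bound f1 gamma (proj1 HC1) Hgam) as Hlip.
    rewrite Hf11, Rminus_0_l, Rabs_Ropp in Hlip. pose proof (Rle_abs (f1 0)). lra. }
  apply fword_moves_endpoints; auto; apply Hfix0; auto using I01_0, I01_1.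
Qed.

Theorem lemma3p25 (f0 f1 : R -> R)
  (beta lambda a0 b0 a1 b1 alpha : R) (N : nat) (gamma' gamma alphabar : R)
  (H : standing_hyps f0 f1 beta lambda a0 b0 a1 b1 alpha N gamma' gamma alphabar)
  (w : list bool) (Hm : (1 <= length w)%nat) (Hnz : In true w)
  (q : R) (Hq01 : I01 q) (Hqfix : fword f0 f1 w q = q)
  (Hqrep : Rabs (Derive (fword f0 f1 w) q) > 1) :
  exists a b p pt : R,
    a < b /\
    (forall y, adm_domain f0 f1 (periodic_seq w) y <-> a <= y <= b) /\
    a <= p /\ p < q /\ q < pt /\ pt <= b /\
    fword f0 f1 w (fword f0 f1 w p) = p /\
    fword f0 f1 w (fword f0 f1 w pt) = pt.
Proof.
  destruct (standing_hyps_branches _ _ _ _ _ _ _ _ _ _ _ _ _ H) as [B0 B1].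
  destruct (standing_hyps_fword_moves_endpoints _ _ _ _ _ _ _ _ _ _ _ _ _ w H Hnz) as [Hg0 Hg1].
  assert (Hq : 0 < q < 1).
  { destruct (Req_dec q 0) as [->|]; [lra|]. destruct (Req_dec q 1) as [->|]; [lra|].
    unfold I01 in Hq01. lra. }
  destruct (repelling_fixed_point_covering (fword f0 f1 w) q
    (monotone_branch_fword f0 f1 w B0 B1) Hq Hqfix Hqrep) as (eps & Heps & Hl & Hr & Hcov).
  destruct (adm_domain_closed_interval f0 f1 (periodic_seq w) B0 B1) as (a & b & Hab).
  assert (Hnbhd : forall y, q - eps <= y <= q + eps -> a <= y <= b).
  { intros y Hy. apply Hab, (adm_domain_contains_covered_interval f0 f1 w B0 B1 Hm (q - eps) (q + eps));
      assumption. }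
  pose proof (Hnbhd (q - eps) ltac:(lra)). pose proof (Hnbhd (q + eps) ltac:(lra)).
  destruct (adm_domain_periodic_endpoints f0 f1 w B0 B1 Hm a b ltac:(lra) Hab) as [Ha Hb].
  exists a, b, a, b. split; [lra|split; [exact Hab|]]. repeat split; (assumption || lra).
Qed.
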